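(* Let $V=\mathbb{C}^n$ be the defining representation of $GL_n(\mathbb{C})$ and $k_1,\dots,k_m\ge 0$. Let $\mu=(\mu_1,\dots,\mu_\ell)$ be a partition of $k_1+\dots+k_m$ with at most $n$ parts. Then the dimension of the space of $S_n$-invariants in the symmetrized weight space $(\mathrm{Sym}^{k_1}(V)\otimes\dots\otimes\mathrm{Sym}^{k_m}(V))_{\bar\mu}$ equals the number of multiset partitions of $\{1^{k_1},2^{k_2},\dots,m^{k_m}\}$ with parts of sizes $\mu_1,\dots,\mu_\ell$. In particular, the dimension of the space of $S_n$-invariants in $\mathrm{Sym}^{k_1}(V)\otimes\dots\otimes\mathrm{Sym}^{k_m}(V)$ equals the number of multiset partitions of $\{1^{k_1},2^{k_2},\dots,m^{k_m}\}$ with at most $n$ parts.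
   Context: $S_n\subset GL_n(\mathbb{C})$ is the subgroup of permutation matrices and $T$ the diagonal torus. For a representation $W$ of $GL_n$ and a weight $\mu$ of $T$ (here $\mu$ is padded with zeros to length $n$), the symmetrized weight space $W_{\bar\mu}$ is the direct sum of the $T$-weight spaces of $W$ for all weights in the $S_n$-orbit of $\mu$; it is stable under $S_n$. A multiset partition of a multiset $M$ is a multiset of nonempty sub-multisets (parts) of $M$ whose multiplicities add up to those of $M$; the size of a part is its cardinality counted with multiplicity. $\{1^{k_1},\dots,m^{k_m}\}$ is the multiset containing $i$ with multiplicity $k_i$. *)

From HB Require Import structures.
From mathcomp Require Import all_boot all_order all_algebra all_fingroup all_field.
Set Implicit Arguments. Unset Strict Implicit. Unset Printing Implicit Defensive.
Import GRing.Theory.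
Local Open Scope ring_scope.

(* Model of W = Sym^{k_1}(V) ⊗ ... ⊗ Sym^{k_m}(V), V = C^n (C = algC).
   Sym^{k}(C^n) = homogeneous polynomials of degree k in x_1..x_n, with the
   monomial basis x^a (a : exponent vector, |a| = k).  The tensor product has
   basis the m-tuples of monomials.  All of this is realized inside the
   finite-dimensional space of functions on a finite index type large enough
   to contain all these basis tuples (exponents are bounded by K = sum k). *)

Section Model.
Variables (n m : nat) (k : 'I_m -> nat).

Definition Ktot : nat := (\sum_(i < m) k i)%N.

(* exponent vectors of monomials in x_1..x_n *)
Definition Mono := {ffun 'I_n -> 'I_(Ktot.+1)}.
Definition TBasis := {ffun 'I_m -> Mono}.

Definition mdeg (a : Mono) : nat := (\sum_(j < n) (a j : nat))%N.
(* b is a basis vector x^{b 0} ⊗ ... ⊗ x^{b (m-1)} of W *)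
Definition in_basis (b : TBasis) : bool := [forall i, mdeg (b i) == k i].
(* T-weight of the basis vector b: diag(t) acts by prod_j t_j^(weight b j) *)
Definition weight (b : TBasis) (j : 'I_n) : nat := (\sum_(i < m) (b i j : nat))%N.

Definition Vec := {ffun TBasis -> algC^o}.
Definition delta (b : TBasis) : Vec := [ffun b' => (b' == b)%:R].

Definition symtensor : {vspace Vec} :=
  <<[seq delta b | b <- enum TBasis & in_basis b]>>%VS.

Definition wspace (lam : 'I_n -> nat) : {vspace Vec} :=
  <<[seq delta b | b <- enum TBasis & in_basis b && [forall j, weight b j == lam j]]>>%VS.

Definition padded (mu : seq nat) (j : 'I_n) : nat := nth 0%N mu j.

(* symmetrized weight space: sum of W_lambda over lambda in the S_n-orbit of mu *)
Definition symweight (mu : seq nat) : {vspace Vec} :=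
  (\sum_(s : 'S_n) wspace (fun j => padded mu (s j)))%VS.

(* Permutation matrix of s (e_j |-> e_{s j}) acting on monomials:
   x_j |-> x_{s j}, so x^a |-> x^{a o s^-1}. *)
Definition permB (s : 'S_n) (b : TBasis) : TBasis :=
  [ffun i => [ffun j => b i ((s^-1)%g j)]].

Definition actS (s : 'S_n) : 'End(Vec) :=
  linfun (fun f : Vec => [ffun b => f (permB (s^-1)%g b)] : Vec).

Definition invariants (U : {vspace Vec}) : {vspace Vec} :=
  (U :&: \bigcap_(s : 'S_n) fixedSpace (actS s))%VS.

(* A sub-multiset ("part") is given by its multiplicity function on 'I_m;
   a multiset partition is a multiset of parts, i.e. a multiplicity function
   on parts. Multiplicities are bounded by K = |M|. *)
Definition Part := {ffun 'I_m -> 'I_(Ktot.+1)}.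
Definition psize (p : Part) : nat := (\sum_(i < m) (p i : nat))%N.
Definition MPart := {ffun Part -> 'I_(Ktot.+1)}.

Definition is_msetpart (c : MPart) : bool :=
  [forall p : Part, (psize p == 0)%N ==> ((c p : nat) == 0)%N] &&
  [forall i : 'I_m, (\sum_(p : Part) (c p : nat) * (p i : nat) == k i)%N].

Definition has_sizes (mu : seq nat) (c : MPart) : bool :=
  [forall s : 'I_(Ktot.+1),
     (\sum_(p : Part | psize p == s) (c p : nat) == count_mem (s : nat) mu)%N].

Definition nparts (c : MPart) : nat := (\sum_(p : Part) (c p : nat))%N.

End Model.

From HB Require Import structures.
From mathcomp Require Import all_boot all_order all_algebra all_fingroup all_field.

(* A basis vector of Sym^{k_1}(V) ⊗ ... ⊗ Sym^{k_m}(V) is an m x n matrix of exponents with row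
   sums k_i; its j-th column is a sub-multiset of M = {1^{k_1}, ..., m^{k_m}}, the j-th entry of
   its T-weight is the size of that column, and S_n permutes the columns.  The S_n-invariants of a
   span of an S_n-stable set of basis vectors are spanned by the orbit sums, so their dimension is
   the number of orbits.  Forgetting the order of the columns and discarding the empty ones
   identifies these orbits with the multiset partitions of M into at most n parts, and the weight
   lies in the orbit of mu exactly when the nonempty columns have sizes mu. *)

Set Implicit Arguments. Unset Strict Implicit. Unset Printing Implicit Defensive.
Import GRing.Theory.

Lemma perm_eq_count_memP (T : eqType) (s t : seq T) :
  reflect (forall x, count_mem x s = count_mem x t) (perm_eq s t).
Proof.
apply: (iffP idP) => [/seq.permP eq_st x|eq_st]; first exact: eq_st.
by apply/allP => x _; rewrite /= eq_st.
Qed.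

Lemma perm_eq_filterC1 (T : eqType) (z : T) (s t : seq T) :
  size s = size t ->
  perm_eq [seq x <- s | x != z] [seq x <- t | x != z] = perm_eq s t.
Proof.
move=> size_st; apply/idP/idP => [eq_nz|]; last exact: perm_filter.
have count_z u : count_mem z u = size u - size [seq x <- u | x != z].
  by rewrite size_filter -(count_predC (pred1 z) u) addnK.
apply/perm_eq_count_memP => x; have [->|nzx] := eqVneq x z.
  by rewrite !count_z size_st (perm_size eq_nz).
have count_nz u : count_mem x [seq y <- u | y != z] = count_mem x u.
  rewrite count_filter; apply: eq_count => y /=.
  by case: (y =P x) => // ->; rewrite nzx.
by rewrite -(count_nz s) -(count_nz t); move/perm_eq_count_memP: eq_nz.
Qed.

Lemma big_seq_count (T : finType) (s : seq T) (F : T -> nat) :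
  \sum_(x <- s) F x = \sum_(p : T) count_mem p s * F p.
Proof.
elim: s => [|x s IHs]; first by rewrite big_nil big1.
rewrite big_cons IHs /= (bigD1 x) //= [in RHS](bigD1 x) //= eqxx addnA mulnDl mul1n.
by congr (_ + _); apply: eq_bigr => p; rewrite eq_sym => /negbTE ->.
Qed.

Lemma codom_nth_pad (T : Type) (x0 : T) (s : seq T) (n : nat) :
  size s <= n -> codom (fun j : 'I_n => nth x0 s j) = s ++ nseq (n - size s) x0.
Proof.
move=> size_s; rewrite codomE (map_comp (nth x0 s) val) val_enum_ord.
rewrite -(subnKC size_s) iotaD map_cat map_nth_iota0 // take_size addKn add0n.
congr (_ ++ _); apply: (@eq_from_nth _ x0) => [|i].
  by rewrite size_map size_iota size_nseq.
rewrite size_map size_iota => lt_i.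
by rewrite (nth_map 0) ?size_iota // nth_iota // nth_nseq lt_i nth_default // leq_addr.
Qed.

Lemma perm_eq_codomP (T : eqType) (n : nat) (f g : 'I_n -> T) :
  reflect (exists s : 'S_n, g =1 f \o s) (perm_eq (codom f) (codom g)).
Proof.
have codom_tuple h : codom h = [tuple h j | j < n] :> seq T by rewrite codomE.
rewrite !codom_tuple perm_sym; apply: (iffP tuple_permP) => -[s eq_fg]; exists s.
  move=> j; move/val_inj/(congr1 (fun t : n.-tuple T => tnth t j)): eq_fg.
  by rewrite !tnth_mktuple.
by congr val; apply: eq_from_tnth => j; rewrite !tnth_mktuple eq_fg.
Qed.

Lemma count_mem_gt_sumn (u : seq nat) (y : nat) : sumn u < y -> count_mem y u = 0.
Proof.
elim: u => //= x u IHu lt_y; rewrite IHu ?(leq_ltn_trans (leq_addl _ _) lt_y) // addn0.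
by have /ltn_eqF-> : x < y := leq_ltn_trans (leq_addr _ _) lt_y.
Qed.

Section FunctionSpace.
Variables (T : finType) (F : fieldType).
Local Notation fT := {ffun T -> F^o}.
Local Open Scope ring_scope.

Lemma mem_span_deltas (P : pred T) (f : fT) :
  (f \in <<[seq [ffun x => (x == b)%:R] : fT | b <- enum T & P b]>>%VS)
    = [forall b, ~~ P b ==> (f b == 0)].
Proof.
apply/idP/forall_inP => [|f_supp].
  rewrite -[X in <<X>>%VS]in_tupleE => /coord_span -> b Pb.
  rewrite sum_ffunE big1 // => i _; rewrite ffunE.
  have /mapP[b' + ->] := mem_nth 0 (ltn_ord i); rewrite mem_filter ffunE => /andP[Pb' _].
  by case: eqP => [eb|]; [rewrite eb Pb' in Pb | rewrite scaler0].
have -> : f = \sum_(b | P b) f b *: [ffun x => (x == b)%:R].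
  apply/ffunP => x; rewrite sum_ffunE; have [Px|nPx] := boolP (P x); last first.
    rewrite (eqP (f_supp x nPx)) big1 // => b Pb; rewrite !ffunE.
    by case: eqP => [exb|]; [rewrite exb Pb in nPx | rewrite scaler0].
  rewrite (bigD1 x) //= big1 => [|b /andP[_ nbx]]; rewrite !ffunE.
    by rewrite eqxx addr0 -[RHS]/(f x * 1) mulr1.
  by rewrite eq_sym (negbTE nbx) scaler0.
apply: memv_suml => b Pb; apply/memvZ/memv_span.
by apply: map_f; rewrite mem_filter Pb mem_enum.
Qed.

Lemma free_of_dual_points (X : seq fT) (w : nat -> T) :
  (forall i j, (i < size X)%N -> (j < size X)%N -> X`_j (w i) = (i == j)%:R) ->
  free X.
Proof.
move=> dualX; rewrite -[X]in_tupleE; apply/freeP => c sum0 i.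
move/ffunP/(_ (w i)): sum0; rewrite sum_ffunE ffunE (bigD1 i) //= big1 => [|j nji].
  by rewrite !ffunE dualX // eqxx addr0 -[_ *: _]/(c i * 1) mulr1.
rewrite !ffunE dualX // -[_ *: _]/(c j * (i == j :> nat)%:R).
by rewrite eq_sym (inj_eq val_inj) (negbTE nji) mulr0.
Qed.

Lemma dim_fiberwise_constant (P : pred T) (C : finType) (cl : T -> C) (V : {vspace fT}) :
    (forall f, f \in V <->
       (forall b, ~~ P b -> f b = 0) /\ {in P &, forall b b', cl b = cl b' -> f b = f b'}) ->
  \dim V = #|[set cl b | b in P]|.
Proof.
move=> memV; have [b0 Pb0|P0] := pickP P; last first.
  have -> : V = 0%VS.
    apply/vspaceP => f; rewrite memv0.
    apply/idP/eqP => [/memV[f_supp _]|->]; last exact: mem0v.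
    by apply/ffunP => b; rewrite ffunE f_supp ?P0.
  rewrite dimv0; apply/esym/eqP; rewrite cards_eq0; apply/eqP/setP => v.
  by rewrite inE; apply/imsetP => -[b]; rewrite unfold_in P0.
(* The indicators [e v] of the fibres of [cl] on [P] form a basis of [V]: a representative of
   each fibre provides the dual points. *)
set classes := [set cl b | b in P].
pose e v : fT := [ffun b => (P b && (cl b == v))%:R].
pose rep v := odflt b0 [pick b | P b && (cl b == v)].
have repP v : v \in classes -> P (rep v) /\ cl (rep v) = v.
  case/imsetP => b; rewrite unfold_in => Pb ->; rewrite /rep.
  case: pickP => [b' /andP[Pb' /eqP] //|].
  by move/(_ b); rewrite Pb eqxx.
have eV v : e v \in V.
  apply/memV; split => [b /negbTE nPb|b b']; first by rewrite ffunE nPb.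
  by rewrite !unfold_in => Pb Pb' eq_cl; rewrite !ffunE Pb Pb' eq_cl.
have V_span : V = <<[seq e v | v <- enum classes]>>%VS.
  apply/vspaceP => f; apply/idP/idP => [/memV[f_supp f_cl]|]; last first.
    by apply/subvP/span_subvP => _ /mapP[v _ ->].
  have -> : f = \sum_(v in classes) f (rep v) *: e v.
    apply/ffunP => b; rewrite sum_ffunE; have [Pb|nPb] := boolP (P b); last first.
      by rewrite f_supp // big1 // => v _; rewrite !ffunE (negbTE nPb) scaler0.
    have classes_b : cl b \in classes by apply: imset_f.
    have [Prep cl_rep] := repP _ classes_b.
    rewrite (bigD1 (cl b)) //= big1 ?addr0 => [|v /andP[_ nv]]; rewrite !ffunE Pb.
      by rewrite eqxx (f_cl _ _ Prep Pb cl_rep) -[RHS]/(_ * 1) mulr1.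
    by rewrite eq_sym (negbTE nv) scaler0.
  apply: memv_suml => v classes_v; apply/memvZ/memv_span.
  by apply: map_f; rewrite mem_enum.
have free_e : free [seq e v | v <- enum classes].
  pose w i := rep (nth (cl b0) (enum classes) i).
  apply: (free_of_dual_points (w := w)) => i j; rewrite size_map => lt_i lt_j.
  have [Prep cl_rep] : P (w i) /\ cl (w i) = nth (cl b0) (enum classes) i.
    by apply: repP; rewrite -mem_enum mem_nth.
  rewrite (nth_map (cl b0)) // ffunE Prep cl_rep /= nth_uniq ?enum_uniq //.
by rewrite V_span (eqP free_e) size_map cardE.
Qed.

End FunctionSpace.

Section Parts.
Variables (m : nat) (k : 'I_m -> nat).
Local Notation K := (Ktot k).
Local Notation Part := (Part k).

Definition part0 : Part := [ffun => ord0].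

Local Notation nonzero s := [seq x <- s | x != part0].

Lemma psize_eq0 (p : Part) : (psize p == 0) = (p == part0).
Proof.
rewrite sum_nat_eq0; apply/forallP/eqP => [p0|-> i]; last by rewrite ffunE.
by apply/ffunP => i; apply/val_inj; rewrite ffunE; apply/eqP/p0.
Qed.

Lemma psize_part0 : psize part0 = 0.
Proof. by apply/eqP; rewrite psize_eq0. Qed.

Lemma big_nonzero (s : seq Part) (F : Part -> nat) :
  F part0 = 0 -> \sum_(x <- nonzero s) F x = \sum_(x <- s) F x.
Proof.
move=> F0; rewrite big_filter [RHS](bigID (fun x => x != part0)) /=.
by rewrite [X in _ = _ + X]big1 ?addn0 // => x /negbNE/eqP->.
Qed.

Definition covers (s : seq Part) : bool := [forall i, \sum_(x <- s) (x i : nat) == k i].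

Lemma covers_psize s : covers s -> \sum_(x <- s) psize x = K.
Proof.
by move/forallP=> cover_s; rewrite exchange_big; apply: eq_bigr => i _; apply/eqP.
Qed.

(* [inord] is exact as soon as the total size is at most [K], see [msetpart_ofE]. *)
Definition msetpart_of (s : seq Part) : MPart k :=
  [ffun p => inord (count_mem p (nonzero s))].

Lemma msetpart_ofE s p :
  \sum_(x <- s) psize x <= K -> msetpart_of s p = count_mem p (nonzero s) :> nat.
Proof.
move=> le_K; rewrite ffunE inordK // ltnS (leq_trans (count_size _ _)) //.
rewrite (leq_trans _ le_K) // -big_nonzero ?psize_part0 // -sum1_size.
rewrite big_seq_cond [X in _ <= X]big_seq_cond.
apply: leq_sum => x; rewrite mem_filter andbT => /andP[nz_x _].
by rewrite lt0n psize_eq0.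
Qed.

Lemma msetpart_of_perm s t :
  perm_eq (nonzero s) (nonzero t) -> msetpart_of s = msetpart_of t.
Proof. by move/perm_eq_count_memP=> eq_st; apply/ffunP => p; rewrite !ffunE eq_st. Qed.

Lemma msetpart_of_inj s t :
    \sum_(x <- s) psize x <= K -> \sum_(x <- t) psize x <= K ->
  msetpart_of s = msetpart_of t -> perm_eq (nonzero s) (nonzero t).
Proof.
move=> le_s le_t eq_st; apply/perm_eq_count_memP => p.
by rewrite -!msetpart_ofE // eq_st.
Qed.

Lemma sum_msetpart_of s (F : Part -> nat) :
    \sum_(x <- s) psize x <= K ->
  \sum_(p : Part) msetpart_of s p * F p = \sum_(x <- nonzero s) F x.
Proof.
by move=> le_K; rewrite [RHS]big_seq_count; apply: eq_bigr => p _; rewrite msetpart_ofE.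
Qed.

Lemma msetpart_of_covers s : covers s -> is_msetpart (msetpart_of s).
Proof.
move=> cover_s; have le_K := eq_leq (covers_psize cover_s).
apply/andP; split; last first.
  apply/forallP => i; rewrite sum_msetpart_of // big_nonzero ?ffunE //.
  by move/forallP: cover_s.
apply/forallP => p; rewrite psize_eq0 msetpart_ofE //; apply/implyP => /eqP->.
by apply/eqP/count_memPn; rewrite mem_filter eqxx.
Qed.

Lemma nparts_msetpart_of s :
  \sum_(x <- s) psize x <= K -> nparts (msetpart_of s) = size (nonzero s).
Proof.
move=> le_K; rewrite -sum1_size [RHS]big_seq_count.
by rewrite /nparts; apply: eq_bigr => p _; rewrite msetpart_ofE ?muln1.
Qed.

Lemma has_sizes_msetpart_of s (mu : seq nat) :
    \sum_(x <- s) psize x <= K -> sumn mu <= K ->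
  has_sizes mu (msetpart_of s) = perm_eq mu [seq psize x | x <- nonzero s].
Proof.
move=> le_s le_mu; set sizes := [seq psize x | x <- nonzero s].
have count_sizes x : \sum_(p | psize p == x) msetpart_of s p = count_mem x sizes.
  rewrite count_map -sum1_count [LHS]big_mkcond [RHS]big_mkcond /= [RHS]big_seq_count.
  by apply: eq_bigr => p _; rewrite msetpart_ofE //; case: eqP; rewrite ?muln1 ?muln0.
have le_sizes : sumn sizes <= K by rewrite sumnE big_map big_nonzero ?psize_part0.
apply/forallP/perm_eq_count_memP => [eq_sizes x|eq_sizes x]; last first.
  by rewrite count_sizes eq_sizes.
have [le_x|lt_x] := leqP x K.
  by rewrite -count_sizes (eqP (eq_sizes (Ordinal (le_x : x < K.+1)))).
by rewrite !count_mem_gt_sumn ?(leq_ltn_trans _ lt_x).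
Qed.

Lemma nonzero_pad s r : nonzero (s ++ nseq r part0) = nonzero s.
Proof. by rewrite filter_cat filter_nseq /= eqxx cats0. Qed.

Lemma covers_pad s r : covers (s ++ nseq r part0) = covers s.
Proof.
apply: eq_forallb => i; rewrite -big_nonzero ?ffunE // nonzero_pad.
by rewrite big_nonzero ?ffunE.
Qed.

Lemma msetpart_of_pad s r : msetpart_of (s ++ nseq r part0) = msetpart_of s.
Proof. by rewrite /msetpart_of nonzero_pad. Qed.

Definition parts_seq (c : MPart k) : seq Part := flatten [seq nseq (c p) p | p <- enum Part].

Lemma count_parts_seq c p : count_mem p (parts_seq c) = c p.
Proof.
rewrite count_flatten sumnE !big_map -enumT big_enum /= (bigD1 p) //= count_nseq /= eqxx mul1n.
by rewrite big1 ?addn0 // => q /negbTE nqp; rewrite count_nseq /= nqp.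
Qed.

Lemma size_parts_seq c : size (parts_seq c) = nparts c.
Proof.
rewrite size_flatten sumnE !big_map -enumT big_enum.
by apply: eq_bigr => p _; rewrite size_nseq.
Qed.

Section MultisetPartition.
Variable c : MPart k.
Hypothesis c_msetpart : is_msetpart c.

Lemma nonzero_parts_seq : nonzero (parts_seq c) = parts_seq c.
Proof.
apply/all_filterP/allP => p; rewrite -has_pred1 has_count count_parts_seq lt0n.
case/andP: c_msetpart => /forallP/(_ p) + _; rewrite psize_eq0.
by move/implyP; apply: contraNN.
Qed.

Lemma covers_parts_seq : covers (parts_seq c).
Proof.
case/andP: c_msetpart => _ /forallP c_cover; apply/forallP => i.
by rewrite big_seq_count; under eq_bigr do rewrite count_parts_seq.
Qed.

Lemma msetpart_of_parts_seq : msetpart_of (parts_seq c) = c.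
Proof.
apply/ffunP => p; apply/val_inj => /=.
by rewrite msetpart_ofE ?nonzero_parts_seq ?count_parts_seq ?covers_psize ?covers_parts_seq.
Qed.

Lemma has_sizes_nparts (mu : seq nat) : sumn mu = K -> has_sizes mu c -> nparts c = size mu.
Proof.
have le_K := eq_leq (covers_psize covers_parts_seq).
move=> sum_mu sizes_c; rewrite -size_parts_seq -nonzero_parts_seq.
rewrite -(size_map (fun x : Part => psize x)).
by apply/esym/perm_size; rewrite -has_sizes_msetpart_of ?sum_mu // msetpart_of_parts_seq.
Qed.

End MultisetPartition.

End Parts.

Section Columns.
Variables (n m : nat) (k : 'I_m -> nat).
Local Notation K := (Ktot k).
Local Notation TB := (TBasis n k).

Definition column (b : TB) (j : 'I_n) : Part k := [ffun i => b i j].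

Definition columns_msetpart (b : TB) : MPart k := msetpart_of (codom (column b)).

Definition of_columns (s : seq (Part k)) : TB :=
  [ffun i => [ffun j : 'I_n => nth (part0 k) s j i]].

Lemma psize_column b j : psize (column b j) = weight b j.
Proof. by apply: eq_bigr => i _; rewrite ffunE. Qed.

Lemma in_basis_covers b : in_basis b = covers (codom (column b)).
Proof.
apply: eq_forallb => i; rewrite codomE big_map big_enum /=.
by congr (_ == _); apply: eq_bigr => j _; rewrite ffunE.
Qed.

Lemma basis_psize b : in_basis b -> \sum_(x <- codom (column b)) psize x = K.
Proof. by rewrite in_basis_covers => /covers_psize. Qed.

Lemma perm_codom_column_permB (s : 'S_n) (b : TB) :
  perm_eq (codom (column (permB s b))) (codom (column b)).
Proof. by apply/perm_eq_codomP; exists s => j; apply/ffunP => i; rewrite !ffunE /= permK. Qed.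

Lemma in_basis_permB (s : 'S_n) (b : TB) : in_basis (permB s b) = in_basis b.
Proof.
rewrite !in_basis_covers; apply: eq_forallb => i.
by rewrite (perm_big _ (perm_codom_column_permB s b)).
Qed.

Lemma columns_msetpart_permB (s : 'S_n) (b : TB) :
  columns_msetpart (permB s b) = columns_msetpart b.
Proof. exact/msetpart_of_perm/perm_filter/perm_codom_column_permB. Qed.

Lemma columns_msetpart_inj b b' : in_basis b -> in_basis b' ->
  columns_msetpart b = columns_msetpart b' -> exists s : 'S_n, b' = permB s b.
Proof.
move=> /basis_psize/eq_leq le_b /basis_psize/eq_leq le_b' /(msetpart_of_inj le_b le_b').
rewrite perm_eq_filterC1 ?size_codom // => /perm_eq_codomP[s eq_col].
exists (s^-1)%g; apply/ffunP => i; apply/ffunP => j.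
by move/ffunP/(_ i): (eq_col j); rewrite !ffunE invgK.
Qed.

Lemma codom_column_of_columns s :
  size s <= n -> codom (column (of_columns s)) = s ++ nseq (n - size s) (part0 k).
Proof.
move=> size_s; rewrite -codom_nth_pad //; apply: eq_codom => j.
by apply/ffunP => i; rewrite !ffunE.
Qed.

Lemma of_columnsK c : is_msetpart c -> nparts c <= n ->
  in_basis (of_columns (parts_seq c)) /\ columns_msetpart (of_columns (parts_seq c)) = c.
Proof.
move=> c_msetpart le_n; rewrite in_basis_covers /columns_msetpart.
rewrite codom_column_of_columns ?size_parts_seq //.
by rewrite covers_pad msetpart_of_pad covers_parts_seq ?msetpart_of_parts_seq.
Qed.

Lemma image_columns_msetpart :
  [set columns_msetpart b | b in @in_basis n m k] =
    [set c : MPart k | is_msetpart c && (nparts c <= n)].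
Proof.
apply/setP => c; rewrite inE; apply/imsetP/andP => [[b b_basis ->]|[c_msetpart le_n]].
  have le_K := eq_leq (basis_psize b_basis).
  rewrite msetpart_of_covers -?in_basis_covers // nparts_msetpart_of //.
  by rewrite (leq_trans (size_subseq (filter_subseq _ _))) ?size_codom ?card_ord.
have [b_basis <-] := of_columnsK c_msetpart le_n.
by exists (of_columns (parts_seq c)).
Qed.

Lemma has_sizes_columns_msetpart (mu : seq nat) b :
    in_basis b -> 0 \notin mu -> sumn mu = K -> size mu <= n ->
  has_sizes mu (columns_msetpart b) =
    [exists s : 'S_n, [forall j, weight b j == padded mu (s j)]].
Proof.
move=> b_basis mu_0 sum_mu size_mu; have le_K := eq_leq (basis_psize b_basis).
rewrite has_sizes_msetpart_of ?sum_mu //.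
have -> : [exists s : 'S_n, [forall j, weight b j == padded mu (s j)]] =
          perm_eq (codom (@padded n mu)) (codom (weight b)).
  apply/existsP/perm_eq_codomP => -[s eq_s]; exists s.
    by move=> j; apply/eqP/(forallP eq_s).
  by apply/forallP => j; rewrite eq_s.
have -> : codom (@padded n mu) = mu ++ nseq (n - size mu) 0 := codom_nth_pad 0 size_mu.
have -> : codom (weight b) = [seq psize x | x <- codom (column b)].
  by rewrite !codomE -map_comp; apply: eq_map => j; rewrite /= psize_column.
rewrite -[RHS](perm_eq_filterC1 0); last first.
  by rewrite size_cat size_nseq subnKC // size_map size_codom card_ord.
rewrite filter_cat filter_nseq eqxx cats0.
have -> : [seq x <- mu | x != 0] = mu by apply/all_filterP; rewrite all_predC has_pred1.
congr perm_eq; rewrite [RHS]filter_map; congr (map _ _); apply: eq_filter => x.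
by rewrite /= psize_eq0.
Qed.

Lemma image_columns_msetpart_sizes (mu : seq nat) : sumn mu = K -> size mu <= n ->
  [set columns_msetpart b | b in [pred b | in_basis b & has_sizes mu (columns_msetpart b)]] =
    [set c : MPart k | is_msetpart c && has_sizes mu c].
Proof.
move=> sum_mu size_mu; apply/setP => c; rewrite inE.
apply/imsetP/andP => [[b /andP[b_basis sizes_b] ->]|[c_msetpart sizes_c]].
  have := imset_f columns_msetpart b_basis.
  by rewrite image_columns_msetpart inE => /andP[].
have le_n : nparts c <= n by rewrite (has_sizes_nparts c_msetpart sum_mu sizes_c).
have [b_basis cmp_b] := of_columnsK c_msetpart le_n.
by exists (of_columns (parts_seq c)); rewrite ?inE ?b_basis ?cmp_b.
Qed.

End Columns.

Section Invariants.
Variables (n m : nat) (k : 'I_m -> nat).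
Local Open Scope ring_scope.
Local Notation K := (Ktot k).
Local Notation TB := (TBasis n k).

Definition basis_span (P : pred TB) : {vspace Vec n k} :=
  <<[seq delta b | b <- enum TB & P b]>>%VS.

Lemma mem_basis_span P f : (f \in basis_span P) = [forall b, ~~ P b ==> (f b == 0)].
Proof. exact: mem_span_deltas. Qed.

Lemma sub_basis_span (P Q : pred TB) : {subset P <= Q} -> (basis_span P <= basis_span Q)%VS.
Proof.
move=> sPQ; apply/subvP => f; rewrite !mem_basis_span => /forall_inP f_supp.
by apply/forall_inP => b nQb; apply: f_supp; apply: contra nQb => /sPQ.
Qed.

Lemma delta_basis_span (P : pred TB) b : P b -> delta b \in basis_span P.
Proof. by move=> Pb; apply/memv_span/map_f; rewrite mem_filter Pb mem_enum. Qed.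

Definition act_fun (s : 'S_n) (f : Vec n k) : Vec n k := [ffun b => f (permB (s^-1)%g b)].

Fact act_fun_is_linear s : linear (act_fun s).
Proof. by move=> a f g; apply/ffunP => b; rewrite !ffunE. Qed.

HB.instance Definition _ s := GRing.isLinear.Build _ _ _ _ (act_fun s) (act_fun_is_linear s).

Lemma actSE s f : actS k s f = act_fun s f.
Proof. exact: (lfunE (act_fun s)). Qed.

Lemma mem_invariants (U : {vspace Vec n k}) (f : Vec n k) :
  (f \in invariants U) = (f \in U) && [forall s : 'S_n, forall b, f (permB s b) == f b].
Proof.
rewrite memv_cap; congr (_ && _); rewrite memvE.
apply/subv_bigcapP/forallP => [f_fix s|f_inv s _].
  apply/forallP => b; have /fixedSpaceP/ffunP/(_ b) := f_fix (s^-1)%g isT.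
  by rewrite actSE ffunE invgK => ->.
apply/fixedSpaceP/ffunP => b; rewrite actSE ffunE.
by apply/eqP/(forallP (f_inv (s^-1)%g)).
Qed.

Lemma dim_invariants_basis_span (P : pred TB) (C : finType) (cl : TB -> C) :
    (forall s b, P (permB s b) = P b) -> (forall s b, cl (permB s b) = cl b) ->
    {in P &, forall b b', cl b = cl b' -> exists s, b' = permB s b} ->
  \dim (invariants (basis_span P)) = #|[set cl b | b in P]|.
Proof.
move=> P_perm cl_perm cl_orbit; apply: dim_fiberwise_constant => f.
rewrite mem_invariants mem_basis_span; split=> [/andP[/forall_inP f_supp /forallP f_inv]|].
  split=> [b /f_supp/eqP //|b b' Pb Pb' /(cl_orbit _ _ Pb Pb')[s ->]].
  exact/esym/eqP/(forallP (f_inv s)).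
case=> f_supp f_fiber; apply/andP; split; first by apply/forall_inP => b /f_supp->.
apply/forallP => s; apply/forallP => b; apply/eqP; have [Pb|nPb] := boolP (P b).
  by apply: f_fiber; rewrite ?unfold_in ?P_perm ?cl_perm.
by rewrite !f_supp ?P_perm.
Qed.

Lemma symweightE (mu : seq nat) :
    0 \notin mu -> sumn mu = K -> (size mu <= n)%N ->
  symweight n k mu =
    basis_span [pred b | in_basis b & has_sizes mu (columns_msetpart b)].
Proof.
move=> mu_0 sum_mu size_mu; apply/eqP; rewrite eqEsubv; apply/andP; split.
  apply/subv_sumP => s _; apply: sub_basis_span => b /andP[b_basis weight_b].
  rewrite inE b_basis has_sizes_columns_msetpart //.
  by apply/existsP; exists s.
apply/span_subvP => x /mapP[b]; rewrite mem_filter => /andP[/andP[b_basis sizes_b] _] ->.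
move: sizes_b; rewrite has_sizes_columns_msetpart // => /existsP[s weight_b].
rewrite memvE (sumv_sup s) // -memvE.
by apply: delta_basis_span; rewrite b_basis.
Qed.

End Invariants.

Theorem corollary3p12 (n m : nat) (k : 'I_m -> nat) :
  (forall mu : seq nat,
     sorted geq mu -> 0 \notin mu -> sumn mu = (\sum_(i < m) k i)%N ->
     size mu <= n ->
     \dim (invariants (symweight n k mu)) =
       #|[set c : MPart k | is_msetpart c && has_sizes mu c]|)
  /\
  \dim (invariants (symtensor n k)) =
    #|[set c : MPart k | is_msetpart c && (nparts c <= n)]|.
Proof.
have cmp_permB := @columns_msetpart_permB n m k.
split=> [mu _ mu_0 sum_mu size_mu|].
  rewrite symweightE // (dim_invariants_basis_span (cl := @columns_msetpart n m k)).
  - by rewrite image_columns_msetpart_sizes.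
  - by move=> s b /=; rewrite in_basis_permB cmp_permB.
  - exact: cmp_permB.
  - by move=> b b' /andP[b_basis _] /andP[b'_basis _]; apply: columns_msetpart_inj.
rewrite (dim_invariants_basis_span (cl := @columns_msetpart n m k)).
- by rewrite image_columns_msetpart.
- exact: in_basis_permB.
- exact: cmp_permB.
- exact: columns_msetpart_inj.
Qed.
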